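(* Let $\mathcal H$ be a Hilbert space, $A$ a bounded, everywhere defined, symmetric operator on $\mathcal H$, and $P$ a self-adjoint operator on $\mathcal H$ such that $PA$ is densely defined. Suppose that the range $R(A)$ is closed, that $N(A)\subset D(P)$, and that $PN(A)\subset N(A)$. Then $AP=(PA)^*$ (and hence $APA$ is self-adjoint).
   Context: $D(X)$, $N(X)$, $R(X)$ denote domain, kernel and range of an operator $X$. $D(PA)=\{x\in\mathcal H: Ax\in D(P)\}$, $D(AP)=D(P)$. *)

From HB Require Import structures.
From mathcomp Require Import all_boot all_order all_algebra.
From mathcomp Require Import complex.
From mathcomp Require Import all_classical all_reals.
Set Implicit Arguments. Unset Strict Implicit. Unset Printing Implicit Defensive.
Import Order.TTheory GRing.Theory Num.Theory.
Local Open Scope ring_scope.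
Local Open Scope complex_scope.

Section Hilbert.
Variables (R : realType) (H : lmodType R[i]) (ip : H -> H -> R[i]).

Definition is_inner_product : Prop :=
  [/\ (forall x y, ip x y = (ip y x)^*),
      (forall (a : R[i]) x y z, ip (a *: x + y) z = a * ip x z + ip y z),
      (forall x, 0 <= ip x x) &
      (forall x, ip x x = 0 -> x = 0)].

Definition cvg_to (u : nat -> H) (x : H) : Prop :=
  forall eps : R[i], 0 < eps ->
    exists N, forall n, (N <= n)%N -> ip (u n - x) (u n - x) < eps.

Definition cauchy_seq (u : nat -> H) : Prop :=
  forall eps : R[i], 0 < eps ->
    exists N, forall m n, (N <= m)%N -> (N <= n)%N ->
      ip (u m - u n) (u m - u n) < eps.

Definition is_hilbert : Prop :=
  is_inner_product /\
  (forall u, cauchy_seq u -> exists x, cvg_to u x).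

Definition closed_set (S : set H) : Prop :=
  forall u x, (forall n, S (u n)) -> cvg_to u x -> S x.

Definition dense_set (S : set H) : Prop :=
  forall x, exists u, (forall n, S (u n)) /\ cvg_to u x.

Definition linear_map (A : H -> H) : Prop :=
  forall (a : R[i]) x y, A (a *: x + y) = a *: A x + A y.

Definition bounded_map (A : H -> H) : Prop :=
  exists M : R[i], forall x, ip (A x) (A x) <= M * ip x x.

Definition symmetric_map (A : H -> H) : Prop :=
  forall x y, ip (A x) y = ip x (A y).

(* partial (possibly unbounded) operators: a domain and an action on it *)
Record pop := Pop { dom : set H ; app : H -> H }.

Definition graph (T : pop) (x y : H) : Prop := dom T x /\ app T x = y.

Definition linear_pop (T : pop) : Prop :=
  dom T 0 /\
  forall (a : R[i]) x y, dom T x -> dom T y ->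
    dom T (a *: x + y) /\ app T (a *: x + y) = a *: app T x + app T y.

Definition adj_graph (T : pop) (y z : H) : Prop :=
  forall x, dom T x -> ip (app T x) y = ip x z.

(* S = T^*  (same domain and same values) *)
Definition is_adjoint_of (S T : pop) : Prop :=
  forall y z, graph S y z <-> adj_graph T y z.

Definition densely_defined (T : pop) : Prop := dense_set (dom T).

Definition selfadjoint (T : pop) : Prop :=
  linear_pop T /\ densely_defined T /\ is_adjoint_of T T.

Definition comp_PA (P : pop) (A : H -> H) : pop :=
  Pop (fun x => dom P (A x)) (fun x => app P (A x)).
Definition comp_AP (A : H -> H) (P : pop) : pop :=
  Pop (dom P) (fun x => A (app P x)).
Definition comp_APA (A : H -> H) (P : pop) : pop :=
  Pop (fun x => dom P (A x)) (fun x => A (app P (A x))).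

End Hilbert.

From Pilot Require Import Defs.
From HB Require Import structures.
From mathcomp Require Import all_boot all_order all_algebra.
From mathcomp Require Import complex.
From mathcomp Require Import all_classical all_reals.
From mathcomp Require Import ring lra.
Set Implicit Arguments. Unset Strict Implicit. Unset Printing Implicit Defensive.
Import Order.TTheory GRing.Theory Num.Theory.
Local Open Scope ring_scope.
Local Open Scope complex_scope.

(* Since [A] is symmetric with closed range, the projection theorem splits
   every vector as [n + A q] with [A n = 0].  Let [(y, z)] be in the graph of
   [(PA)^*].  Testing against [N(A)] forces [z = A (A s)]; writing
   [y = y0 + A q] with [y0 \in N(A) \subset D(P)] and decomposing the test
   vectors the same way, one finds that [y] is in the domain of [P^* = P]
   with [P y = P y0 + A s], hence [A P y = z] because [P N(A) \subset N(A)].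
   Self-adjointness of [APA] then follows formally from [AP = (PA)^*]. *)

Lemma ReD (R : realType) (x y : R[i]) : complex.Re (x + y) = complex.Re x + complex.Re y.
Proof. by case: x => a b; case: y. Qed.

Lemma ReN (R : realType) (x : R[i]) : complex.Re (- x) = - complex.Re x.
Proof. by case: x. Qed.

Lemma ReMl_real (R : realType) (a : R) (x : R[i]) : complex.Re (a%:C * x) = a * complex.Re x.
Proof. by case: x => c d /=; rewrite mul0r subr0. Qed.

Lemma ReJ (R : realType) (x : R[i]) : complex.Re x^* = complex.Re x.
Proof. by case: x. Qed.

Section InnerProduct.
Variables (R : realType) (H : lmodType R[i]) (ip : H -> H -> R[i]).
Hypothesis hip : is_inner_product ip.

Lemma ipC x y : ip x y = (ip y x)^*.
Proof. by case: hip. Qed.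

Lemma ipDl x y z : ip (x + y) z = ip x z + ip y z.
Proof. by case: hip => _ hl _ _; rewrite -[x]scale1r hl mul1r scale1r. Qed.

Lemma ip0l z : ip 0 z = 0.
Proof. by apply: (addrI (ip 0 z)); rewrite -ipDl !addr0. Qed.

Lemma ipZl a x z : ip (a *: x) z = a * ip x z.
Proof. by case: hip => _ hl _ _; rewrite -[a *: x]addr0 hl ip0l addr0. Qed.

Lemma ipNl x z : ip (- x) z = - ip x z.
Proof. by rewrite -scaleN1r ipZl mulN1r. Qed.

Lemma ipDr x y z : ip x (y + z) = ip x y + ip x z.
Proof. by rewrite [ip x y]ipC [ip x z]ipC ipC ipDl rmorphD. Qed.

Lemma ipNr x z : ip x (- z) = - ip x z.
Proof. by rewrite [ip x z]ipC ipC ipNl rmorphN. Qed.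

Lemma ip0r z : ip z 0 = 0.
Proof. by rewrite ipC ip0l rmorph0. Qed.

Definition reip x y := complex.Re (ip x y).
Definition normsq x := reip x x.

Lemma ipxxE x : ip x x = (normsq x)%:C.
Proof.
case: hip => _ _ ge0 _; rewrite /normsq /reip.
by move: (ger0_Im (ge0 x)); case: (ip x x) => a b /= ->.
Qed.

Lemma normsq_ge0 x : 0 <= normsq x.
Proof. by case: hip => _ _ ge0 _; move: (ge0 x); rewrite ipxxE ler0c. Qed.

Lemma normsq_eq0 x : normsq x = 0 -> x = 0.
Proof. by case: hip => _ _ _ def0 nx0; apply: def0; rewrite ipxxE nx0. Qed.

Lemma reipC x y : reip x y = reip y x.
Proof. by rewrite /reip ipC ReJ. Qed.

Lemma reipDl x y z : reip (x + y) z = reip x z + reip y z.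
Proof. by rewrite /reip ipDl ReD. Qed.

Lemma reipDr x y z : reip x (y + z) = reip x y + reip x z.
Proof. by rewrite /reip ipDr ReD. Qed.

Lemma reipNl x z : reip (- x) z = - reip x z.
Proof. by rewrite /reip ipNl ReN. Qed.

Lemma reipNr x z : reip x (- z) = - reip x z.
Proof. by rewrite /reip ipNr ReN. Qed.

Lemma reipZl (t : R) x z : reip (t%:C *: x) z = t * reip x z.
Proof. by rewrite /reip ipZl ReMl_real. Qed.

Lemma reipZr (t : R) x z : reip x (t%:C *: z) = t * reip x z.
Proof. by rewrite reipC reipZl reipC. Qed.

Lemma normsqD x y : normsq (x + y) = normsq x + 2 * reip x y + normsq y.
Proof. by rewrite /normsq reipDl !reipDr (reipC y x); ring. Qed.

Lemma normsqB x y : normsq (x - y) = normsq x - 2 * reip x y + normsq y.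
Proof. by rewrite normsqD reipNr /normsq reipNl reipNr; ring. Qed.

Lemma normsqZ (t : R) x : normsq (t%:C *: x) = t * t * normsq x.
Proof. by rewrite /normsq reipZl reipZr mulrA. Qed.

Lemma parallelogram x y :
  normsq (x - y) + normsq (x + y) = 2 * normsq x + 2 * normsq y.
Proof. by rewrite normsqB normsqD; ring. Qed.

(* Peter-Paul form of the triangle inequality, multiplied through by [s]. *)
Lemma normsqD_le (s : R) x y : 0 < s ->
  s * normsq (x + y) <= s * (1 + s) * normsq x + (s + 1) * normsq y.
Proof.
move=> s_gt0; have := normsq_ge0 (s%:C *: x - y).
by rewrite normsqB normsqZ reipZl normsqD; nra.
Qed.

End InnerProduct.

Lemma invSn_lt_eventually (R : realType) (e : R) : 0 < e ->
  exists N, forall n, (N <= n)%N -> (n.+1%:R : R)^-1 < e.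
Proof.
move=> e_gt0; exists (Num.Def.trunc e^-1) => n leNn.
rewrite invf_plt ?posrE ?ltr0Sn //.
by apply: (lt_le_trans (truncnS_gt _)); rewrite ler_nat ltnS.
Qed.

Section Projection.
Variables (R : realType) (H : lmodType R[i]) (ip : H -> H -> R[i]).
Hypothesis hip : is_inner_product ip.

Lemma cvg_toP u x : Defs.cvg_to ip u x ->
  forall e : R, 0 < e -> exists N, forall n, (N <= n)%N -> normsq ip (u n - x) < e.
Proof.
move=> cvg_ux e e_gt0; have [|N uN] := cvg_ux e%:C; first by rewrite ltcR.
by exists N => n /uN; rewrite ipxxE // ltcR.
Qed.

Lemma cauchy_seqP u :
  (forall e : R, 0 < e -> exists N, forall m n, (N <= m)%N -> (N <= n)%N ->
     normsq ip (u m - u n) < e) -> Defs.cauchy_seq ip u.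
Proof.
move=> cauchy_u eps; rewrite ltcE => /andP[/eqP Im_eps Re_eps].
have [N uN] := cauchy_u _ Re_eps; exists N => m n leNm leNn.
by rewrite ipxxE // ltcE /= Im_eps eqxx uN.
Qed.

Definition subspace (S : set H) :=
  S 0 /\ forall a x y, S x -> S y -> S (a *: x + y).

Variable S : set H.
Hypothesis S_subspace : subspace S.

Lemma subspace_shift p w a : S p -> S w -> S (p + a *: w).
Proof. by case: S_subspace => _ S_lin Sp Sw; rewrite addrC; apply: S_lin. Qed.

Lemma subspace_midpoint x y : S x -> S y -> S (2^-1 *: (x + y)).
Proof.
case: S_subspace => S0 _ Sx Sy; rewrite scalerDr -[_ *: x]add0r.
exact: subspace_shift (subspace_shift _ S0 Sx) Sy.
Qed.

(* The parallelogram law at the midpoint of [a] and [b], which lies in [S]. *)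
Lemma normsqB_le_of_dist_lbound (y : H) (d : R) a b :
  (forall q, S q -> d <= normsq ip (y - q)) -> S a -> S b ->
  normsq ip (a - b) <= 2 * normsq ip (y - a) + 2 * normsq ip (y - b) - 4 * d.
Proof.
move=> d_lb Sa Sb; set m := 2^-1 *: (a + b).
have half : (2^-1 : R[i]) + 2^-1 = 1 by rewrite [RHS]splitr mul1r.
have ab_mid : (y - b) + (y - a) = (y - m) + (y - m).
  rewrite addrACA [RHS]addrACA -!opprD; congr (_ - _).
  by rewrite /m -scalerDl half scale1r addrC.
have := parallelogram hip (y - b) (y - a).
have -> : (y - b) - (y - a) = a - b by rewrite opprB [LHS]addrC addrA subrK.
rewrite ab_mid (normsqD hip (y - m)) -/(normsq ip (y - m)).
have := d_lb _ (subspace_midpoint Sa Sb); rewrite -/m; lra.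
Qed.

Lemma normsq_le_of_approx (x : H) (d : R) : 0 <= d ->
  (forall e, 0 < e -> exists2 a, normsq ip a <= d + e & normsq ip (x - a) <= e) ->
  normsq ip x <= d.
Proof.
move=> d_ge0 approx; apply/ler_addgt0Pr => eta eta_gt0.
pose s := eta / (2 * (d + 1)).
have s_gt0 : 0 < s by apply: divr_gt0 => //; rewrite mulr_gt0 //; lra.
pose e := s * eta / (2 * (1 + s) ^+ 2).
have e_gt0 : 0 < e.
  by apply: divr_gt0; [exact: mulr_gt0 | rewrite mulr_gt0 ?exprn_gt0 //; lra].
have [a a_le x_le] := approx e e_gt0.
have key := normsqD_le hip a (x - a) s_gt0; rewrite addrC subrK in key.
have sd : s * d <= eta / 2.
  have sd1 : s * (d + 1) = eta / 2 by rewrite /s; field; lra.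
  nra.
have se : (1 + s) ^+ 2 * e = s * (eta / 2) by rewrite /e; field; lra.
have ssd : s * (s * d) <= s * (eta / 2) by rewrite ler_pM2l.
have sp_gt0 : 0 < s * (1 + s) by rewrite mulr_gt0 //; lra.
have sa : s * (1 + s) * normsq ip a <= s * (1 + s) * (d + e).
  by rewrite ler_pM2l.
have sxa : (s + 1) * normsq ip (x - a) <= (s + 1) * e.
  by rewrite ler_pM2l //; lra.
rewrite -(ler_pM2l s_gt0); move: se; rewrite expr2; lra.
Qed.

Lemma reip_orthogonal_of_min (y p : H) : S p ->
  (forall q, S q -> normsq ip (y - p) <= normsq ip (y - q)) ->
  forall w, S w -> reip ip (y - p) w = 0.
Proof.
move=> Sp p_min w Sw; set c := reip ip (y - p) w; set K := normsq ip w.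
have K_ge0 : 0 <= K by exact: normsq_ge0.
(* [t |-> -2 t c + t^2 K] is nonnegative; evaluate it at [c / (K + 1)]. *)
have quad t : 0 <= - 2 * t * c + t * t * K.
  have := p_min _ (subspace_shift t%:C Sp Sw).
  by rewrite opprD addrA (normsqB hip (y - p)) normsqZ ?reipZr // -/c -/K; lra.
pose t := c / (K + 1).
have c_t : c = t * (K + 1) by rewrite /t divfK // gt_eqF //; lra.
have ineq := quad t; rewrite c_t in ineq.
have K2_gt0 : 0 < K + 2 by lra.
have tt_le0 : t * t <= 0.
  by rewrite -(ler_pM2r K2_gt0) mul0r; nra.
have t0 : t = 0.
  by apply/eqP; rewrite -sqrf_eq0 eq_le sqr_ge0 andbT expr2.
by rewrite c_t t0 mul0r.
Qed.

Lemma projection_onto_closed_subspace :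
  (forall u, Defs.cauchy_seq ip u -> exists x, Defs.cvg_to ip u x) ->
  closed_set ip S ->
  forall y, exists2 p, S p & forall w, S w -> reip ip (y - p) w = 0.
Proof.
move=> complete S_closed y.
pose D : set R := fun r => exists2 q, S q & r = normsq ip (y - q).
have D_inf : has_inf D.
  split; first by exists (normsq ip (y - 0)), 0; first by case: S_subspace.
  by exists 0 => _ [q _ ->]; exact: normsq_ge0.
pose d := inf D.
have d_lb q : S q -> d <= normsq ip (y - q).
  by move=> Sq; apply: ge_inf D_inf.2 _ _; exists q.
have d_ge0 : 0 <= d by apply: lb_le_inf D_inf.1 _ => _ [q _ ->]; exact: normsq_ge0.
have /choice [xs xs_min] : forall n : nat,
    exists x, S x /\ normsq ip (y - x) < d + n.+1%:R^-1.
  move=> n; have n_gt0 : 0 < (n.+1%:R : R)^-1 by rewrite invr_gt0 ltr0Sn.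
  by have [_ [x Sx ->] lt_x] := inf_adherent n_gt0 D_inf; exists x.
have xs_cauchy : Defs.cauchy_seq ip xs.
  apply: cauchy_seqP => e e_gt0.
  have e4_gt0 : 0 < e / 4 by rewrite divr_gt0.
  have [N N_small] := invSn_lt_eventually e4_gt0.
  exists N => m n leNm leNn.
  have := normsqB_le_of_dist_lbound d_lb (xs_min m).1 (xs_min n).1.
  have := (xs_min m).2; have := (xs_min n).2.
  have := N_small _ leNm; have := N_small _ leNn.
  set im := (m.+1%:R : R)^-1; set iN := (n.+1%:R : R)^-1; lra.
have [p xs_p] := complete _ xs_cauchy.
have Sp : S p by apply: S_closed xs_p => n; exact: (xs_min n).1.
have p_min : normsq ip (y - p) <= d.
  apply: (normsq_le_of_approx d_ge0) => e e_gt0.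
  have [N1 N1_small] := invSn_lt_eventually e_gt0.
  have [N2 N2_near] := cvg_toP xs_p e_gt0.
  pose n := maxn N1 N2; exists (y - xs n).
    have := (xs_min n).2; have := N1_small n (leq_maxl _ _).
    set iN := (n.+1%:R : R)^-1; lra.
  have -> : y - p - (y - xs n) = xs n - p by rewrite opprB [LHS]addrC addrA subrK.
  exact/ltW/N2_near/leq_maxr.
exists p => //; apply: (reip_orthogonal_of_min Sp) => q Sq.
exact: le_trans p_min (d_lb q Sq).
Qed.

End Projection.

Section PartialOperators.
Variables (R : realType) (H : lmodType R[i]) (T : pop H).
Hypothesis T_lin : linear_pop T.

Lemma linear_pop_app0 : app T 0 = 0.
Proof.
case: T_lin => T0 T_comb; have [_] := T_comb 1 0 0 T0 T0.
rewrite scale1r addr0 scale1r => app00.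
by apply: (addrI (app T 0)); rewrite addr0 -app00.
Qed.

Lemma linear_popB u v : dom T u -> dom T v ->
  dom T (v - u) /\ app T (v - u) = app T v - app T u.
Proof.
case: T_lin => _ T_comb Tu Tv.
by have := T_comb (-1) u v Tu Tv; rewrite !scaleN1r addrC [_ + app T v]addrC.
Qed.

End PartialOperators.

Section AdjointOfAP.
Variables (R : realType) (H : lmodType R[i]) (ip : H -> H -> R[i]) (A : H -> H).
Hypotheses (hip : is_inner_product ip) (A_lin : linear_map A).
Hypothesis A_sym : symmetric_map ip A.

Lemma linear_map0 : A 0 = 0.
Proof.
have := A_lin 1 0 0; rewrite scale1r addr0 scale1r => A00.
by apply: (addrI (A 0)); rewrite addr0 -A00.
Qed.

Lemma linear_mapD x y : A (x + y) = A x + A y.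
Proof. by rewrite -[x]scale1r A_lin !scale1r. Qed.

Lemma subspace_range : subspace (range A).
Proof.
split; first by exists 0; rewrite ?linear_map0.
by move=> a _ _ [x _ <-] [y _ <-]; exists (a *: x + y); rewrite ?A_lin.
Qed.

Lemma ip_ker_range n x : A n = 0 -> ip n (A x) = 0.
Proof. by move=> An0; rewrite -A_sym An0 ip0l. Qed.

Lemma ip_range_ker n x : A n = 0 -> ip (A x) n = 0.
Proof. by move=> An0; rewrite A_sym An0 ip0r. Qed.

Hypothesis complete :
  forall u, Defs.cauchy_seq ip u -> exists x, Defs.cvg_to ip u x.
Hypothesis closed_range : closed_set ip (range A).

Lemma ker_range_decomposition y : exists2 n, A n = 0 & exists q, y = n + A q.
Proof.
have [_ [q _ <-] orth] :=
  projection_onto_closed_subspace hip subspace_range complete closed_range y.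
exists (y - A q); last by exists q; rewrite subrK.
apply: (normsq_eq0 hip); rewrite /normsq /reip A_sym.
by apply: orth; exact: imageT.
Qed.

Variable P : pop H.
Hypothesis P_sa : selfadjoint ip P.
Hypothesis ker_dom : forall x, A x = 0 -> dom P x.
Hypothesis P_ker : forall x, A x = 0 -> A (app P x) = 0.

Lemma selfadjoint_sym u v : dom P u -> dom P v -> ip (app P u) v = ip u (app P v).
Proof. by move=> Pu Pv; case: P_sa => _ [_ P_adj]; apply: (P_adj v _).1. Qed.

Lemma adj_graph_comp_AP y z :
  Defs.graph (comp_AP A P) y z -> adj_graph ip (comp_PA P A) y z.
Proof. by move=> [/= Py <-] x PAx /=; rewrite selfadjoint_sym // A_sym. Qed.

Lemma adj_graph_comp_PA_range y z :
  adj_graph ip (comp_PA P A) y z -> exists s, z = A (A s).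
Proof.
move=> adj_yz; have [z0 Az0 [r z_dec]] := ker_range_decomposition z.
have [r0 Ar0 [s r_dec]] := ker_range_decomposition r; exists s.
suff z00 : z0 = 0 by rewrite z_dec z00 add0r r_dec linear_mapD // Ar0 add0r.
(* test the adjoint relation against the kernel vector [z0] itself *)
have PAz0 : dom P (A z0) by rewrite Az0; case: P_sa => -[].
have := adj_yz z0 PAz0; rewrite /= Az0 (linear_pop_app0 P_sa.1) ip0l //.
rewrite z_dec ipDr // ip_ker_range // addr0 => /esym.
by case: hip => _ _ _; apply.
Qed.

Lemma graph_comp_AP y z :
  adj_graph ip (comp_PA P A) y z -> Defs.graph (comp_AP A P) y z.
Proof.
move=> adj_yz; have [s z_AAs] := adj_graph_comp_PA_range adj_yz.
have [y0 Ay0 [q y_dec]] := ker_range_decomposition y.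
have Py0 := ker_dom Ay0.
suff /(P_sa.2.2 y _).2 [Py PyE] : adj_graph ip P y (app P y0 + A s).
  by split => //=; rewrite PyE linear_mapD P_ker // add0r z_AAs.
move=> v Pv; have [v0 Av0 [c v_dec]] := ker_range_decomposition v.
have Pv0 := ker_dom Av0.
have [PAc PAcE] := linear_popB P_sa.1 Pv0 Pv.
have vAc : v - v0 = A c by rewrite v_dec addrC addKr.
rewrite vAc in PAc PAcE.
have -> : app P v = app P v0 + app P (A c) by rewrite PAcE addrC subrK.
rewrite ipDl // {1}y_dec (ipDr hip (app P v0)) ip_ker_range ?P_ker // addr0.
rewrite selfadjoint_sym // (adj_yz c PAc) z_AAs -A_sym v_dec.
rewrite ipDl // !(ipDr hip) (ip_ker_range s Av0) (ip_range_ker c (P_ker Ay0)).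
by rewrite addr0 add0r.
Qed.

Lemma adjoint_comp_AP : is_adjoint_of ip (comp_AP A P) (comp_PA P A).
Proof. by move=> y z; split; [exact: adj_graph_comp_AP | exact: graph_comp_AP]. Qed.

End AdjointOfAP.

Section CompositionAPA.
Variables (R : realType) (H : lmodType R[i]) (ip : H -> H -> R[i]).
Variables (A : H -> H) (P : pop H).
Hypotheses (A_lin : linear_map A) (A_sym : symmetric_map ip A).
Hypothesis P_lin : linear_pop P.

Lemma linear_pop_comp_APA : linear_pop (comp_APA A P).
Proof.
case: P_lin => P0 P_comb; split; first by rewrite /= linear_map0.
move=> a x y /= PAx PAy; rewrite A_lin.
by have [PAxy ->] := P_comb a _ _ PAx PAy; rewrite A_lin.
Qed.

Lemma selfadjoint_comp_APA :
  densely_defined ip (comp_PA P A) ->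
  is_adjoint_of ip (comp_AP A P) (comp_PA P A) ->
  selfadjoint ip (comp_APA A P).
Proof.
move=> PA_dense AP_adj; split; first exact: linear_pop_comp_APA.
split=> // y z; split.
  by move=> [/= PAy <-] x PAx; rewrite A_sym; apply: (AP_adj _ _).1.
move=> adj_yz; apply: (AP_adj (A y) z).2 => x PAx.
by rewrite -A_sym; exact: adj_yz.
Qed.

End CompositionAPA.

Theorem theorem7 (R : realType) (H : lmodType R[i]) (ip : H -> H -> R[i])
  (hH : is_hilbert ip)
  (A : H -> H) (P : pop H)
  (hA_lin : linear_map A) (hA_bdd : bounded_map ip A)
  (hA_sym : symmetric_map ip A)
  (hP : selfadjoint ip P)
  (hPA : densely_defined ip (comp_PA P A))
  (hRA : closed_set ip (range A))
  (hNA : forall x, A x = 0 -> dom P x)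
  (hPN : forall x, A x = 0 -> A (app P x) = 0) :
  is_adjoint_of ip (comp_AP A P) (comp_PA P A) /\
  selfadjoint ip (comp_APA A P).
Proof.
have [hip complete] := hH.
have AP_adj := adjoint_comp_AP hip hA_lin hA_sym complete hRA hP hNA hPN.
split=> //; exact: selfadjoint_comp_APA hA_lin hA_sym hP.1 hPA AP_adj.
Qed.
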